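(* Let $f:\mathbb{R}^n\to\mathbb{R}^m$ be continuous at $\bar x\in\mathbb{R}^n$. Then $f$ is strongly regular around $\bar x$ if and only if $f$ is both linearly open (equivalently, metrically regular) around $\bar x$ and metrically injective around $\bar x$. In this case $\operatorname{inj}(f,\bar x)\ge\operatorname{lop}(f,\bar x)$.
   Context: $B(x,r)$ and $B^\circ(x,r)$ denote closed and open balls. $f$ is linearly open around $\bar x$ if there exist $\alpha>0$ and neighbourhoods $U$ of $\bar x$, $V$ of $f(\bar x)$ with $B^\circ(f(x),\alpha r)\cap V\subseteq f(B^\circ(x,r))$ for all $x\in U$, $r>0$; $\operatorname{lop}(f,\bar x)$ is the supremum of such $\alpha$ ($0$ if none). (Equivalently, $f$ is metrically regular around $\bar x$: there exist $\kappa>0$ and neighbourhoods $U,V$ with $\operatorname{dist}(x,f^{-1}(y))\le\kappa\|y-f(x)\|$ for all $(x,y)\in U\times V$; the infimum of such $\kappa$ is $\operatorname{reg}(f,\bar x)$, and $\operatorname{lop}(f,\bar x)\cdot\operatorname{reg}(f,\bar x)=1$.) $f$ is strongly regular around $\bar x$ if it is linearly open around $\bar x$ and there exist neighbourhoods $U$ of $\bar x$ and $V$ of $f(\bar x)$ such that $f^{-1}(y)\cap U$ is a singleton for every $y\in V$. $f$ is metrically injective around $\bar x$ if there exist $\beta,\delta>0$ with $\|f(x_1)-f(x_2)\|\ge\beta\|x_1-x_2\|$ for all $x_1,x_2\in B(\bar x,\delta)$; $\operatorname{inj}(f,\bar x)$ is the supremum of such $\beta$. *)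

(* R^n is modelled as 'rV[R]_n with the Euclidean norm. *)
From HB Require Import structures.
From mathcomp Require Import all_boot all_order all_algebra.
From mathcomp Require Import all_classical all_reals all_analysis.
Set Implicit Arguments. Unset Strict Implicit. Unset Printing Implicit Defensive.
Import Order.TTheory GRing.Theory Num.Theory.
Import numFieldNormedType.Exports.
Local Open Scope classical_set_scope.
Local Open Scope ring_scope.

Section Defs.
Variable R : realType.

Definition enorm (n : nat) (v : 'rV[R]_n) : R :=
  Num.sqrt (\sum_(i < n) (v ord0 i) ^+ 2).

Definition cball (n : nat) (x : 'rV[R]_n) (r : R) : set 'rV[R]_n :=
  [set y | enorm (y - x) <= r].
Definition oball (n : nat) (x : 'rV[R]_n) (r : R) : set 'rV[R]_n :=
  [set y | enorm (y - x) < r].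

Definition is_nbhd (n : nat) (x : 'rV[R]_n) (U : set 'rV[R]_n) : Prop :=
  exists r : R, 0 < r /\ oball x r `<=` U.

Definition lin_open_with (n m : nat) (f : 'rV[R]_n -> 'rV[R]_m)
    (xbar : 'rV[R]_n) (alpha : R) : Prop :=
  exists (U : set 'rV[R]_n) (V : set 'rV[R]_m),
    is_nbhd xbar U /\ is_nbhd (f xbar) V /\
    forall x r, U x -> 0 < r ->
      oball (f x) (alpha * r) `&` V `<=` f @` oball x r.

Definition linearly_open (n m : nat) (f : 'rV[R]_n -> 'rV[R]_m)
    (xbar : 'rV[R]_n) : Prop :=
  exists alpha : R, 0 < alpha /\ lin_open_with f xbar alpha.

(* lop(f,xbar): supremum of admissible alpha, 0 if there is none
   (valued in the extended reals, since it may be +oo) *)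
Definition lop (n m : nat) (f : 'rV[R]_n -> 'rV[R]_m) (xbar : 'rV[R]_n)
    : \bar R :=
  ereal_sup ([set (a%:E)%E | a in [set a : R | 0 < a /\ lin_open_with f xbar a]]
             `|` [set 0%E]).

Definition metr_inj_with (n m : nat) (f : 'rV[R]_n -> 'rV[R]_m)
    (xbar : 'rV[R]_n) (beta : R) : Prop :=
  exists delta : R, 0 < delta /\
    forall x1 x2, cball xbar delta x1 -> cball xbar delta x2 ->
      beta * enorm (x1 - x2) <= enorm (f x1 - f x2).

Definition metrically_injective (n m : nat) (f : 'rV[R]_n -> 'rV[R]_m)
    (xbar : 'rV[R]_n) : Prop :=
  exists beta : R, 0 < beta /\ metr_inj_with f xbar beta.

Definition injf (n m : nat) (f : 'rV[R]_n -> 'rV[R]_m) (xbar : 'rV[R]_n)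
    : \bar R :=
  ereal_sup ([set (b%:E)%E | b in [set b : R | 0 < b /\ metr_inj_with f xbar b]]
             `|` [set 0%E]).

Definition strongly_regular (n m : nat) (f : 'rV[R]_n -> 'rV[R]_m)
    (xbar : 'rV[R]_n) : Prop :=
  linearly_open f xbar /\
  exists (U : set 'rV[R]_n) (V : set 'rV[R]_m),
    is_nbhd xbar U /\ is_nbhd (f xbar) V /\
    forall y, V y -> exists! x, U x /\ f x = y.

End Defs.

(* Linear openness with constant alpha puts a preimage of
   f x2 within r of x1 as soon as |f x2 - f x1| < alpha r; by uniqueness of
   preimages that preimage is x2 itself, so |x1 - x2| <= |f x1 - f x2| / alpha.
   Thus every admissible alpha is an admissible injectivity constant, which
   gives inj >= lop.  Continuity is what keeps f x2 in the neighbourhood where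
   preimages are unique.  Conversely, metric injectivity makes the preimages
   provided by linear openness unique. *)

From mathcomp Require Import all_boot all_order all_algebra.
From mathcomp Require Import all_classical all_reals all_analysis.
From mathcomp Require Import ring lra.
Import Order.TTheory GRing.Theory Num.Theory.
Import numFieldNormedType.Exports.
Set Implicit Arguments.
Unset Strict Implicit.
Unset Printing Implicit Defensive.
Local Open Scope classical_set_scope.
Local Open Scope ring_scope.

Section CauchySchwarz.
Variables (R : realType) (n : nat).
Implicit Types a b : 'I_n -> R.

Lemma sum_mul_sqr_le a b :
  (\sum_i a i * b i) ^+ 2 <= (\sum_i a i ^+ 2) * (\sum_i b i ^+ 2).
Proof.
set A := \sum_i a i ^+ 2; set B := \sum_i b i ^+ 2; set C := \sum_i a i * b i.
have A_ge0 : 0 <= A by apply: sumr_ge0 => i _; exact: sqr_ge0.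
have [A0|A_neq0] := eqVneq A 0.
  have a0 i : a i = 0.
    apply/eqP; rewrite -sqrf_eq0; apply/eqP.
    by move/psumr_eq0P: A0; apply=> // j _; exact: sqr_ge0.
  have -> : C = 0 by rewrite /C big1 // => i _; rewrite a0 mul0r.
  by rewrite A0 expr0n /= mul0r.
have A_gt0 : 0 < A by rewrite lt_def A_neq0 A_ge0.
have expand : \sum_i (C * a i - A * b i) ^+ 2 = A * (A * B - C ^+ 2).
  have -> : A * (A * B - C ^+ 2) =
      \sum_i (C ^+ 2 * a i ^+ 2 - 2 * C * A * (a i * b i) + A ^+ 2 * b i ^+ 2).
    rewrite !big_split /= sumrN -!mulr_sumr -/A -/B -/C; ring.
  by apply: eq_bigr => i _; ring.
have : 0 <= A * (A * B - C ^+ 2).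
  by rewrite -expand; apply: sumr_ge0 => i _; exact: sqr_ge0.
by rewrite pmulr_rge0 // subr_ge0.
Qed.

Lemma sum_mul_le_sqrt a b :
  \sum_i a i * b i <= Num.sqrt (\sum_i a i ^+ 2) * Num.sqrt (\sum_i b i ^+ 2).
Proof.
rewrite -sqrtrM ?sumr_ge0 // => [|i _]; last exact: sqr_ge0.
rewrite (le_trans (ler_norm _)) // -sqrtr_sqr ler_wsqrtr //.
exact: sum_mul_sqr_le.
Qed.

End CauchySchwarz.

Section EuclideanNorm.
Variables (R : realType) (n : nat).
Implicit Types u v w : 'rV[R]_n.

Lemma enorm_ge0 v : 0 <= enorm v.
Proof. exact: sqrtr_ge0. Qed.

Lemma enorm0 : enorm (0 : 'rV[R]_n) = 0.
Proof. by rewrite /enorm big1 ?sqrtr0 // => i _; rewrite mxE expr0n. Qed.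

Lemma enormN v : enorm (- v) = enorm v.
Proof. by rewrite /enorm; congr Num.sqrt; apply: eq_bigr => i _; rewrite mxE sqrrN. Qed.

Lemma enormB u v : enorm (u - v) = enorm (v - u).
Proof. by rewrite -enormN opprB. Qed.

Lemma enormD u v : enorm (u + v) <= enorm u + enorm v.
Proof.
rewrite /enorm.
set A := \sum_i u ord0 i ^+ 2; set B := \sum_i v ord0 i ^+ 2.
have A_ge0 : 0 <= A by apply: sumr_ge0 => i _; exact: sqr_ge0.
have B_ge0 : 0 <= B by apply: sumr_ge0 => i _; exact: sqr_ge0.
have -> : \sum_i (u + v) ord0 i ^+ 2 = A + 2 * \sum_i u ord0 i * v ord0 i + B.
  rewrite /A /B mulr_sumr -!big_split /=.
  by apply: eq_bigr => i _; rewrite mxE; ring.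
have S_ge0 : 0 <= Num.sqrt A + Num.sqrt B by rewrite addr_ge0 // sqrtr_ge0.
rewrite -(ger0_norm S_ge0) -sqrtr_sqr ler_wsqrtr //.
have -> : (Num.sqrt A + Num.sqrt B) ^+ 2 = A + 2 * (Num.sqrt A * Num.sqrt B) + B.
  by rewrite sqrrD !sqr_sqrtr //; ring.
by rewrite lerD2r lerD2l ler_pM2l ?sum_mul_le_sqrt.
Qed.

Lemma enorm_triangle u v w : enorm (u - w) <= enorm (u - v) + enorm (v - w).
Proof. by have := enormD (u - v) (v - w); rewrite addrA subrK. Qed.

Lemma enorm_coord v i : `|v ord0 i| <= enorm v.
Proof.
rewrite -sqrtr_sqr ler_wsqrtr // (bigD1 i) //= lerDl.
by apply: sumr_ge0 => j _; exact: sqr_ge0.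
Qed.

Lemma mx_norm_le_enorm v : `|v| <= enorm v.
Proof.
change (mx_norm v <= enorm v); rewrite mx_normrE.
apply/bigmax_leP; split; first exact: enorm_ge0.
by move=> [i j] _ /=; rewrite (ord1 i); exact: enorm_coord.
Qed.

Lemma enorm_le_mx_norm v : enorm v <= n%:R * `|v|.
Proof.
rewrite -(ger0_norm (mulr_ge0 (ler0n _ n) (normr_ge0 v))) -sqrtr_sqr ler_wsqrtr //.
apply: (@le_trans _ _ (\sum_(i < n) `|v| ^+ 2)).
  apply: ler_sum => i _; rewrite -real_normK ?num_real // lerXn2r // ?nnegrE //.
  change (`|v ord0 i| <= mx_norm v); rewrite mx_normrE.
  exact: (le_bigmax _ (fun ij : 'I_1 * 'I_n => `|v ij.1 ij.2|) (ord0, i)).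
rewrite sumr_const card_ord exprMn -[_ *+ n]mulr_natl ler_wpM2r ?sqr_ge0 //.
by rewrite -natrX ler_nat; case: n => // k; rewrite expnS leq_pmulr.
Qed.

Lemma enorm_le0 v : enorm v <= 0 -> v = 0.
Proof. by move=> v_le0; apply/eqP; rewrite -normr_le0 (le_trans (mx_norm_le_enorm v)). Qed.

End EuclideanNorm.

Lemma continuous_at_enorm (R : realType) n m (f : 'rV[R]_n -> 'rV[R]_m) xbar :
  {for xbar, continuous f} -> forall eps, 0 < eps ->
  exists2 d, 0 < d & forall x, enorm (x - xbar) < d -> enorm (f x - f xbar) < eps.
Proof.
move=> f_cont eps eps_gt0.
(* the factor [m + 1] absorbs the comparison [enorm <= m * mx_norm], also for [m = 0] *)
have m1_gt0 : 0 < m%:R + 1 :> R by rewrite ltr_wpDl.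
have near_f := @cvgr_dist_lt _ _ _ (nbhs xbar) _ f (f xbar) f_cont _
  (divr_gt0 eps_gt0 m1_gt0).
have [d /= d_gt0 ball_f] := proj1 (nbhs_ballP _ _) (near_f _).
exists d => // x x_near.
have /ball_f : ball xbar d x.
  rewrite mx_norm_ball /ball_ /= distrC.
  by apply: le_lt_trans x_near; exact: mx_norm_le_enorm.
rewrite distrC ltr_pdivlMr // => fx_near.
apply: (le_lt_trans (enorm_le_mx_norm _)); apply: le_lt_trans fx_near.
by rewrite mulrC ler_wpM2l // lerDl.
Qed.

Section StrongRegularity.
Variables (R : realType) (n m : nat) (f : 'rV[R]_n -> 'rV[R]_m) (xbar : 'rV[R]_n).

Definition locally_unique_preimage : Prop :=
  exists (U : set 'rV[R]_n) (V : set 'rV[R]_m),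
    is_nbhd xbar U /\ is_nbhd (f xbar) V /\
    forall y, V y -> exists! x, U x /\ f x = y.

Lemma lin_open_with_balls alpha : lin_open_with f xbar alpha ->
  exists a b, [/\ 0 < a, 0 < b & forall x r y,
    enorm (x - xbar) < a -> 0 < r -> enorm (y - f x) < alpha * r ->
    enorm (y - f xbar) < b -> exists2 x', enorm (x' - x) < r & f x' = y].
Proof.
case=> U [V [[a [a_gt0 aU]] [[b [b_gt0 bV]] f_open]]].
exists a, b; split=> // x r y x_near r_gt0 y_near y_nearbar.
have [x' x'_near <-] := f_open x r (aU x x_near) r_gt0 y (conj y_near (bV y y_nearbar)).
by exists x'.
Qed.

Lemma locally_unique_preimage_balls : locally_unique_preimage ->
  exists a b, [/\ 0 < a, 0 < b & forall x x',
    enorm (x - xbar) < a -> enorm (x' - xbar) < a ->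
    enorm (f x - f xbar) < b -> f x = f x' -> x = x'].
Proof.
case=> U [V [[a [a_gt0 aU]] [[b [b_gt0 bV]] f_uniq]]].
exists a, b; split=> // x x' x_near x'_near fx_near fxx'.
have [x0 [_ x0_uniq]] := f_uniq (f x) (bV _ fx_near).
by rewrite -(x0_uniq x) ?(x0_uniq x') //; split=> //; apply: aU.
Qed.

Section InjectivityEstimate.
Variables alpha a b : R.
Hypothesis alpha_gt0 : 0 < alpha.
Hypothesis f_open : forall x r y, enorm (x - xbar) < a -> 0 < r ->
  enorm (y - f x) < alpha * r -> enorm (y - f xbar) < b ->
  exists2 x', enorm (x' - x) < r & f x' = y.
Hypothesis f_uniq : forall x x', enorm (x - xbar) < a -> enorm (x' - xbar) < a ->
  enorm (f x - f xbar) < b -> f x = f x' -> x = x'.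

Lemma lin_open_injectivity_estimate x1 x2 :
  enorm (x1 - xbar) < a / 4 -> enorm (x2 - xbar) < a / 4 ->
  enorm (f x2 - f xbar) < b ->
  alpha * enorm (x1 - x2) <= enorm (f x1 - f x2).
Proof.
move=> x1_near x2_near fx2_near.
set t := enorm (f x2 - f x1) / alpha.
have t_ge0 : 0 <= t by rewrite divr_ge0 ?enorm_ge0 ?ltW.
have x12_near : enorm (x2 - x1) < a / 2.
  by have := enorm_triangle x2 xbar x1; rewrite [enorm (xbar - x1)]enormB; lra.
have dist_lt r : t < r -> enorm (x2 - x1) < r.
  move=> t_lt_r; have [r_le|r_gt] := lerP r (a / 2); last exact: lt_trans r_gt.
  have fx2_open : enorm (f x2 - f x1) < alpha * r.
    by move: t_lt_r; rewrite ltr_pdivrMr // mulrC.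
  have x1_nearbar : enorm (x1 - xbar) < a by lra.
  have [x' x'_near fx'] := f_open x1_nearbar (le_lt_trans t_ge0 t_lt_r) fx2_open fx2_near.
  have x'_nearbar : enorm (x' - xbar) < a.
    by have := enorm_triangle x' x1 xbar; lra.
  by rewrite -(f_uniq x'_nearbar _ _ fx') ?fx' //; lra.
have dist_le_t : enorm (x2 - x1) <= t.
  by rewrite leNgt; apply/negP => t_lt; have := dist_lt ((t + enorm (x2 - x1)) / 2); lra.
by rewrite (enormB x1) (enormB (f x1)) mulrC -ler_pdivlMr.
Qed.

End InjectivityEstimate.

Lemma metr_inj_with_of_lin_open alpha : {for xbar, continuous f} -> 0 < alpha ->
  lin_open_with f xbar alpha -> locally_unique_preimage -> metr_inj_with f xbar alpha.
Proof.
move=> f_cont alpha_gt0 /lin_open_with_balls [a1 [b1 [a1_gt0 b1_gt0 f_open]]].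
case/locally_unique_preimage_balls=> [a2 [b2 [a2_gt0 b2_gt0 f_uniq]]].
set a := Num.min a1 a2; set b := Num.min b1 b2.
have a_gt0 : 0 < a by rewrite lt_min a1_gt0.
have b_gt0 : 0 < b by rewrite lt_min b1_gt0.
have a_le1 : a <= a1 by rewrite ge_min lexx.
have a_le2 : a <= a2 by rewrite ge_min lexx orbT.
have b_le1 : b <= b1 by rewrite ge_min lexx.
have b_le2 : b <= b2 by rewrite ge_min lexx orbT.
have [d d_gt0 f_near] := continuous_at_enorm f_cont b_gt0.
set c := Num.min d (a / 4).
have c_le_d : c <= d by rewrite ge_min lexx.
have c_le_a : c <= a / 4 by rewrite ge_min lexx orbT.
have c_gt0 : 0 < c by rewrite lt_min d_gt0 divr_gt0.
exists (c / 2); split; first by rewrite divr_gt0.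
move=> x1 x2; rewrite /cball /= => x1_near x2_near.
apply: (lin_open_injectivity_estimate (a := a) (b := b)) => //; try lra.
- move=> x r y x_near r_gt0 y_near y_nearbar.
  exact: f_open (lt_le_trans x_near a_le1) r_gt0 y_near (lt_le_trans y_nearbar b_le1).
- move=> x x' x_near x'_near fx_near.
  exact: f_uniq (lt_le_trans x_near a_le2) (lt_le_trans x'_near a_le2)
    (lt_le_trans fx_near b_le2).
- by apply: f_near; lra.
Qed.

Lemma locally_unique_preimage_of_metr_inj alpha beta : 0 < alpha -> 0 < beta ->
  lin_open_with f xbar alpha -> metr_inj_with f xbar beta -> locally_unique_preimage.
Proof.
move=> alpha_gt0 beta_gt0 /lin_open_with_balls [a [b [a_gt0 b_gt0 f_open]]].
case=> delta [delta_gt0 f_inj].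
have radius_gt0 : 0 < Num.min (alpha * delta) b by rewrite lt_min mulr_gt0.
exists (oball xbar delta), (oball (f xbar) (Num.min (alpha * delta) b)).
split; first by exists delta; split.
split; first by exists (Num.min (alpha * delta) b); split.
move=> y; rewrite /oball /= lt_min => /andP[y_near y_nearbar].
have xbar_near : enorm (xbar - xbar) < a by rewrite subrr enorm0.
have [x x_near fx] := f_open xbar delta y xbar_near delta_gt0 y_near y_nearbar.
exists x; split=> // x' [x'_near fx'].
have := f_inj x x' (ltW x_near) (ltW x'_near).
rewrite fx fx' subrr enorm0 pmulr_rle0 // => /enorm_le0/eqP.
by rewrite subr_eq0 => /eqP.
Qed.

Lemma lop_le_injf : {for xbar, continuous f} -> locally_unique_preimage ->
  (lop f xbar <= injf f xbar)%E.
Proof.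
move=> f_cont f_uniq; apply: ereal_sup_le => _ [[alpha [alpha_gt0 f_open] <-]|->].
  by left; exists alpha => //; split=> //; exact: metr_inj_with_of_lin_open.
by right.
Qed.

End StrongRegularity.

Theorem mainTheorem4 (R : realType) (n m : nat) (f : 'rV[R]_n -> 'rV[R]_m)
    (xbar : 'rV[R]_n) (hcont : {for xbar, continuous f}) :
  (strongly_regular f xbar <->
     (linearly_open f xbar /\ metrically_injective f xbar)) /\
  (strongly_regular f xbar -> (lop f xbar <= injf f xbar)%E).
Proof.
split; first split.
- case=> f_lin_open f_uniq; split=> //.
  case: f_lin_open => alpha [alpha_gt0 f_open]; exists alpha; split=> //.
  exact: metr_inj_with_of_lin_open.
- case=> f_lin_open [beta [beta_gt0 f_inj]]; split=> //.
  case: f_lin_open => alpha [alpha_gt0 f_open].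
  exact: (locally_unique_preimage_of_metr_inj alpha_gt0 beta_gt0 f_open f_inj).
- by case=> _ f_uniq; exact: lop_le_injf.
Qed.
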